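(* Let $q$ be a prime power, let $0\le t\le q^2-2$ with $q$-adic expression $t=b_0+b_1q$ ($0\le b_0,b_1\le q-1$), let $\Delta=\{0,1,\ldots,t\}$ and let $E=D_\Delta\subseteq\mathbb{F}_{q^2}^{q^2}$ be the corresponding (extended) Reed–Solomon code obtained by evaluating at all elements of $\mathbb{F}_{q^2}$. Then the EAQECC associated with $E$ (Hermitian construction) has parameters $$[[q^2,\,(q-b_1)^2-2b_0-2,\,t+2;\,b_1^2]]_q$$ when $b_0+b_1<q-1$, and parameters $$[[q^2,\,(q-b_1-1)^2,\,t+2;\,b_1^2+2(b_0+b_1-q)+3]]_q$$ otherwise (i.e. when $b_0+b_1\ge q-1$).
   Context: Let $P_1,\dots,P_{q^2}$ be all the elements of $\mathbb{F}_{q^2}$ (the roots of $X^{q^2}-X$). For $\Delta\subseteq\{0,1,\ldots,q^2-2\}$, $D_\Delta$ is the $\mathbb{F}_{q^2}$-linear code spanned by the vectors $(P_1^i,\dots,P_{q^2}^i)$, $i\in\Delta$ (with $0^0=1$). The Hermitian inner product on $\mathbb{F}_{q^2}^N$ is $x\cdot y=\sum_{i} x_iy_i^q$. For a linear code $E\subseteq\mathbb{F}_{q^2}^N$ of dimension $k$ whose Hermitian dual $C$ has minimum distance $d$, the associated EAQECC is an entanglement-assisted quantum error-correcting code over $\mathbb{F}_q$ with parameters $[[N,\,N-2k+c,\,d;\,c]]_q$, where $c=\dim E-\dim(E\cap C)$. *)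

From HB Require Import structures.
From mathcomp Require Import all_boot all_order all_algebra all_field.
Set Implicit Arguments. Unset Strict Implicit. Unset Printing Implicit Defensive.
Import Order.TTheory GRing.Theory Num.Theory.
Local Open Scope ring_scope.

(* Codes of length N = #|F| over F = F_{q^2}; coordinate j corresponds to the
   evaluation point P_j := enum_val j (an enumeration of all elements of F). *)
Definition evalpt (F : finFieldType) (j : 'I_#|F|) : F := enum_val j.

(* (P_1^i, ..., P_N^i), with 0^0 = 1 (x ^+ 0 = 1). *)
Definition evalvec (F : finFieldType) (i : nat) : 'rV[F]_#|F| :=
  \row_(j < #|F|) (evalpt j) ^+ i.

Definition Dcode (F : finFieldType) (Delta : seq nat) : {vspace 'rV[F]_#|F|} :=
  <<map (@evalvec F) Delta>>%VS.

Definition hdot (F : finFieldType) (q : nat) (x y : 'rV[F]_#|F|) : F :=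
  \sum_(j < #|F|) x 0 j * (y 0 j) ^+ q.

Definition hdual_set (F : finFieldType) (q : nat) (E : {vspace 'rV[F]_#|F|})
  : seq 'rV[F]_#|F| :=
  [seq y <- enum [set: 'rV[F]_#|F|] |
     [forall x : 'rV[F]_#|F|, (x \in E) ==> (hdot q x y == 0)]].

(* Hermitian dual: the code (span) of all y with x . y = 0 for every x in E.
   (This set is already a subspace, so the span is just the set itself.) *)
Definition hdual (F : finFieldType) (q : nat) (E : {vspace 'rV[F]_#|F|})
  : {vspace 'rV[F]_#|F|} :=
  <<hdual_set q E>>%VS.

Definition wt (F : finFieldType) (y : 'rV[F]_#|F|) : nat :=
  #|[set j | y 0 j != 0]|.

Definition min_dist (F : finFieldType) (C : {vspace 'rV[F]_#|F|}) (d : nat) : Prop :=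
  (exists2 y, y \in C & (y != 0) && (wt y == d)) /\
  (forall y, y \in C -> y != 0 -> (d <= wt y)%N).

From HB Require Import structures.
From mathcomp Require Import all_boot all_order all_algebra all_field.
From mathcomp Require Import fingroup cyclic zify.
Set Implicit Arguments. Unset Strict Implicit. Unset Printing Implicit Defensive.
Import Order.TTheory GRing.Theory Num.Theory.

(* Over F = GF(q^2) the power sum of a^k over all a in F is -1 when k > 0 and
   q^2 - 1 divides k, and 0 otherwise.  Hence, for i, j <= t <= q^2 - 2, the
   Hermitian product of the evaluation vectors of x^j and x^i is nonzero exactly
   when j = s(i), where s(a + b q) = (q-1-b) + (q-1-a) q is an involution of the
   exponents below q^2.  So E :&: C is spanned by the x^i with s(i) > t, and c
   counts the i <= t with s(i) <= t, a count of base-q digit pairs.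
   The dual C contains every vector (g(P_j)^q)_j with deg g <= q^2 - t - 2, and
   the polynomial vanishing at q^2 - t - 2 points gives one of weight t + 2.
   Conversely, a nonzero y in C of weight <= t + 1 is not orthogonal to the
   polynomial of degree <= t vanishing on the support of y minus one point. *)

(** * Counting in base q *)

Lemma count_leq_iota lo r : count (leq lo) (iota 0 r) = r - lo.
Proof.
elim: r => [|r IH] //; rewrite -[r.+1]addn1 iotaD count_cat IH /= addn0.
by case: leqP; lia.
Qed.

Lemma count_lex_iota A (c : bool) r :
  count (fun a => (A < a) || (a == A) && c) (iota 0 r) = (r - A.+1) + (c && (A < r)).
Proof.
elim: r => [|r IH]; first by rewrite andbF.
rewrite -[r.+1]addn1 iotaD count_cat IH /= addn0.
by move: IH; case: c; case: (ltngtP A r) => /=; lia.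
Qed.

Lemma sum_count_nat (P : pred nat) n : \sum_(0 <= i < n) P i = count P (iota 0 n).
Proof.
rewrite -sum1_count [RHS]big_mkcond /index_iota subn0.
by apply: eq_bigr => i _; case: (P i).
Qed.

Lemma count_iota_shift (P : pred nat) m r :
  count P (iota m r) = count (fun a => P (a + m)) (iota 0 r).
Proof.
rewrite -[m in iota m]addn0 iotaDl count_map.
by apply: eq_count => a /=; rewrite addnC.
Qed.

Lemma count_iota_digits (P : pred nat) n q :
  count P (iota 0 (n * q)) =
  \sum_(0 <= b < n) count (fun a => P (a + b * q)) (iota 0 q).
Proof.
elim: n => [|n IH]; first by rewrite big_geq.
rewrite big_nat_recr //= -IH mulSn addnC iotaD count_cat add0n; congr (_ + _).
exact: count_iota_shift.
Qed.

Lemma leq_digits q x0 x1 y0 y1 : x0 < q -> y0 < q ->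
  (x0 + x1 * q <= y0 + y1 * q) = (x1 < y1) || (x1 == y1) && (x0 <= y0).
Proof. by move=> x0_lt y0_lt; case: (ltngtP x1 y1) => [||->] /=; nia. Qed.

Section DualExponent.
Variable q : nat.
Hypothesis q_gt1 : 1 < q.

Definition dual_exp i := (q.-1 - i %/ q) + (q.-1 - i %% q) * q.

Lemma divn_digits a b : a < q -> (a + b * q) %/ q = b.
Proof. by move=> a_lt; rewrite divnDMl ?divn_small //; lia. Qed.

Lemma modn_digits a b : a < q -> (a + b * q) %% q = a.
Proof. by move=> a_lt; rewrite addnC modnMDl modn_small. Qed.

Lemma digitsP i : i < q * q ->
  exists a b, [/\ a < q, b < q & i = a + b * q].
Proof.
move=> i_lt; exists (i %% q), (i %/ q); split; first by rewrite ltn_mod; lia.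
  by rewrite ltn_divLR; lia.
by rewrite addnC -divn_eq.
Qed.

Lemma dual_exp_digits a b : a < q -> b < q ->
  dual_exp (a + b * q) = (q.-1 - b) + (q.-1 - a) * q.
Proof. by move=> a_lt b_lt; rewrite /dual_exp divn_digits // modn_digits. Qed.

Lemma dual_expK i : i < q * q -> dual_exp (dual_exp i) = i.
Proof.
case/digitsP=> a [b [a_lt b_lt ->]].
by rewrite !dual_exp_digits; try lia; congr (_ + _ * _); lia.
Qed.

Lemma dual_exp_addM i : i < q * q ->
  dual_exp i + i * q = (i %/ q).+1 * (q * q - 1).
Proof.
case/digitsP=> a [b [a_lt b_lt ->]]; rewrite dual_exp_digits // divn_digits //.
nia.
Qed.

Lemma dual_exp_lt i : 0 < i < q * q -> dual_exp i < q * q - 1.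
Proof.
case/andP=> i_gt0 /digitsP [a [b [a_lt b_lt ei]]].
rewrite ei dual_exp_digits //; move: i_gt0; rewrite ei; nia.
Qed.

Lemma dvdn_dual_exp i j : i < q * q -> j < q * q - 1 ->
  (0 < j + i * q) && (q * q - 1 %| j + i * q) = (j == dual_exp i).
Proof.
move=> i_lt j_lt; have dual_eq := dual_exp_addM i_lt.
apply/andP/eqP => [[sum_gt0 dvd_sum] | ->]; last first.
  by rewrite dual_eq dvdn_mull //; split; nia.
have i_gt0 : 0 < i.
  have [i0|//] := posnP i; move: dvd_sum sum_gt0; rewrite i0 mul0n addn0.
  by move=> dvd_j /dvdn_leq /(_ dvd_j); lia.
have dual_lt : dual_exp i < q * q - 1 by apply: dual_exp_lt; rewrite i_gt0.
rewrite -(modn_small j_lt) -(modn_small dual_lt); apply/eqP.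
rewrite -(eqn_modDr (i * q)) dual_eq modnMl; exact: dvd_sum.
Qed.
End DualExponent.

Section DualExponentCount.
Variables q b0 b1 : nat.
Hypotheses (q_gt1 : 1 < q) (b0_lt : b0 < q) (b1_lt : b1 < q).
Local Notation t := (b0 + b1 * q).

Lemma count_dual_exp_leq_row b r : b < q -> r <= q ->
  count (fun a => dual_exp q (a + b * q) <= t) (iota 0 r) =
  (r - (q - b1)) + ((q.-1 - b0 <= b) && (q.-1 - b1 < r)).
Proof.
move=> b_lt r_le; have -> : q - b1 = (q.-1 - b1).+1 by lia.
rewrite -count_lex_iota; apply: eq_in_count => a; rewrite mem_iota => /andP[_ a_lt].
by rewrite dual_exp_digits ?leq_digits; lia.
Qed.

Lemma count_dual_exp_leq :
  count (fun i => dual_exp q i <= t) (iota 0 t.+1) =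
  b1 * b1 + 2 * (b0 + b1 + 1 - q) + (q.-1 <= b0 + b1).
Proof.
have -> : t.+1 = b1 * q + b0.+1 by lia.
rewrite iotaD count_cat count_iota_digits add0n count_iota_shift.
rewrite count_dual_exp_leq_row //.
rewrite (eq_big_nat _ _ (F2 := fun b => b1 + (q.-1 - b0 <= b))); last first.
  move=> b /andP [_ b_lt]; rewrite count_dual_exp_leq_row ?(ltn_trans b_lt) //.
  by rewrite subKn ?(ltnW b1_lt) // (_ : q.-1 - b1 < q)%N ?andbT //; lia.
rewrite big_split sum_nat_const_nat sum_count_nat count_leq_iota /=.
by case: (leqP (q.-1 - b0) b1); case: (ltnP (q.-1 - b1) b0.+1) => /=; lia.
Qed.
End DualExponentCount.

Local Open Scope ring_scope.

(** * Power sums over a finite field *)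

Section FinFieldPowerSums.
Variable F : finFieldType.
Local Notation N := #|F|.

Lemma natr_card_finField : N%:R = 0 :> F.
Proof.
by rewrite -cardsT -[_%:R]FinRing.zmodXgE (expg_cardG (G := [set: F]%G)) ?inE.
Qed.

Lemma expf_card_pred (a : F) : a != 0 -> a ^+ N.-1 = 1.
Proof.
move=> a_neq0; apply: (mulfI a_neq0); rewrite -exprS prednK ?expf_card ?mulr1 //.
exact: ltnW (finNzRing_gt1 F).
Qed.

Lemma sum_expr_small k : (k < N.-1)%N -> \sum_(a : F) a ^+ k = 0.
Proof.
case: k => [_ | k k_lt].
  by under eq_bigr do rewrite expr0; rewrite sumr_const natr_card_finField.
have [c c_neq0 c_exp] : exists2 c : F, c != 0 & c ^+ k.+1 != 1.
  apply/exists_inP; apply: contraTT k_lt => /exists_inPn all_roots.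
  rewrite -leqNgt -(cardC1 (0 : F)) cardE max_unity_roots ?enum_uniq //.
  by apply/allP => a; rewrite mem_enum unity_rootE => /all_roots /negPn.
(* a |-> c * a permutes F, so the sum is invariant under a factor c^k.+1 != 1. *)
have /eqP : \sum_(a : F) a ^+ k.+1 = c ^+ k.+1 * \sum_(a : F) a ^+ k.+1.
  rewrite {1}(reindex_inj (mulfI c_neq0)) big_distrr /=.
  by apply: eq_bigr => a _; rewrite exprMn.
rewrite -subr_eq0 -{1}[\sum_a _]mul1r -mulrBl mulf_eq0 subr_eq0 eq_sym.
by rewrite (negbTE c_exp) => /eqP.
Qed.

Lemma sum_expr k :
  \sum_(a : F) a ^+ k = if (0 < k)%N && (N.-1 %| k)%N then -1 else 0.
Proof.
have N1_gt0 : (0 < N.-1)%N by rewrite -subn1 subn_gt0 finNzRing_gt1.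
case: k => [|k] /=; first exact: sum_expr_small.
rewrite (bigD1 0) //= expr0n add0r.
under eq_bigr => a a_neq0 do rewrite -(expr_mod _ (expf_card_pred a_neq0)).
rewrite /dvdn; case: (posnP (k.+1 %% N.-1)) => [-> | r_gt0] /=.
  under eq_bigr do rewrite expr0.
  rewrite sumr_const cardC1; apply/eqP.
  by rewrite -addr_eq0 -mulrSr prednK ?natr_card_finField // ltnW ?finNzRing_gt1.
have := sum_expr_small (ltn_pmod k.+1 N1_gt0).
by rewrite (bigD1 0) //= expr0n (gtn_eqF r_gt0) add0r.
Qed.

Lemma sum_horner_small (g : {poly F}) : (size g <= N.-1)%N -> \sum_(a : F) g.[a] = 0.
Proof.
move=> g_small; under eq_bigr do rewrite horner_coef.
rewrite exchange_big big1 // => i _.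
by rewrite -big_distrr /= sum_expr_small ?mulr0 // (leq_trans (ltn_ord i)).
Qed.

End FinFieldPowerSums.

(** * Evaluation codes and the Hermitian form *)

Section Evaluation.
Variable F : finFieldType.
Local Notation N := #|F|.

Definition ev (f : {poly F}) : 'rV[F]_N := \row_j f.[evalpt j].

Fact ev_is_linear : linear ev.
Proof. by move=> a f g; apply/rowP => j; rewrite !mxE hornerD hornerZ. Qed.
HB.instance Definition _ :=
  GRing.isLinear.Build F {poly F} 'rV[F]_N _ ev ev_is_linear.

Lemma ev_Xn i : ev 'X^i = evalvec F i.
Proof. by apply/rowP => j; rewrite !mxE hornerXn. Qed.

Lemma sum_evalpt (g : F -> F) : \sum_(j < N) g (evalpt j) = \sum_(a : F) g a.
Proof. by rewrite /evalpt (big_enum_val (A := F)). Qed.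

Lemma evalpt_inj : injective (@evalpt F).
Proof. exact: enum_val_inj. Qed.

Lemma ev_coef (f : {poly F}) n : (size f <= n)%N ->
  ev f = \sum_(i < n) f`_i *: evalvec F i.
Proof.
move=> f_small; apply/rowP => j; rewrite !mxE (horner_coef_wide _ f_small) summxE.
by apply: eq_bigr => i _; rewrite !mxE.
Qed.

Lemma ev_eq0 (f : {poly F}) : (size f <= N)%N -> ev f = 0 -> f = 0.
Proof.
move=> f_small f0; apply: (roots_geq_poly_eq0 (rs := enum F)); last 2 first.
- exact: enum_uniq.
- by rewrite -cardE.
apply/allP => a _; have /rowP /(_ (enum_rank a)) := f0.
by rewrite !mxE /evalpt enum_rankK rootE => ->.
Qed.

Lemma size_sum_scaleXn I (r : seq I) (c : I -> F) (e : I -> nat) n :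
  (forall i, e i < n)%N -> (size (\sum_(i <- r) c i *: 'X^(e i))%R <= n)%N.
Proof.
move=> e_lt; elim/big_ind: _ => [|p p' p_small p'_small|i _].
- by rewrite size_poly0.
- by rewrite (leq_trans (size_polyD _ _)) // geq_max p_small.
- by rewrite (leq_trans (size_scale_leq _ _)) // size_polyXn.
Qed.

Lemma free_evalvec s : uniq s -> all (gtn N) s -> free (map (evalvec F) s).
Proof.
move=> s_uniq /allP s_lt; rewrite -[map _ _]in_tupleE.
apply/freeP => k; set X := map _ s => sum0 i.
have size_s (l : 'I_(size X)) : (l < size s)%N by rewrite -(size_map (evalvec F)).
pose f := \sum_l k l *: 'X^(nth 0%N s l).
have f0 : f = 0.
  apply: ev_eq0; first by apply: size_sum_scaleXn => l; apply: s_lt; rewrite mem_nth.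
  rewrite -[RHS]sum0 linear_sum; apply: eq_bigr => l _.
  by rewrite linearZZ /= ev_Xn (nth_map 0%N).
have /(congr1 (coefp (nth 0%N s i))) := f0.
rewrite /= coef0 coef_sumMXn (big_pred1 i) // => l /=.
by rewrite nth_uniq.
Qed.

Lemma dim_Dcode s : uniq s -> all (gtn N) s -> \dim (Dcode F s) = size s.
Proof. by move=> s_uniq s_lt; rewrite (eqP (free_evalvec s_uniq s_lt)) size_map. Qed.

Lemma dim_Dcode_iota n : (n <= N)%N -> \dim (Dcode F (iota 0 n)) = n.
Proof.
move=> n_le; rewrite dim_Dcode ?iota_uniq ?size_iota //.
by apply/allP => i; rewrite mem_iota /= => /leq_trans; apply.
Qed.

Lemma Dcode_iotaP n v :
  reflect (exists2 f : {poly F}, (size f <= n)%N & v = ev f)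
          (v \in Dcode F (iota 0 n)).
Proof.
apply: (iffP idP) => [|[f f_small ->]]; last first.
  rewrite (ev_coef f_small); apply: memv_suml => i _; apply/memvZ/memv_span.
  by rewrite map_f // mem_iota /=.
rewrite /Dcode -[map _ _]in_tupleE => /coord_span ->.
set X := in_tuple _.
have X_lt (i : 'I_(size X)) : (i < n)%N.
  by apply: leq_trans (ltn_ord i) _; rewrite size_map size_iota.
exists (\sum_i coord X i v *: 'X^i); first exact: size_sum_scaleXn.
rewrite linear_sum; apply: eq_bigr => i _.
by rewrite linearZZ /= ev_Xn (nth_map 0%N) ?nth_iota ?size_iota.
Qed.

Definition vanish_poly (S : {set 'I_N}) : {poly F} :=
  \prod_(a <- map (@evalpt F) (enum S)) ('X - a%:P).

Lemma size_vanish_poly S : size (vanish_poly S) = #|S|.+1.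
Proof. by rewrite size_prod_XsubC size_map -cardE. Qed.

Lemma root_vanish_poly S j : root (vanish_poly S) (evalpt j) = (j \in S).
Proof. by rewrite root_prod_XsubC (mem_map evalpt_inj) mem_enum. Qed.

End Evaluation.

Section HermitianForm.
Variables (F : finFieldType) (q : nat).
Local Notation N := #|F|.

Lemma hdot_suml I (r : seq I) (c : I -> F) (v : I -> 'rV[F]_N) y :
  hdot q (\sum_(i <- r) c i *: v i) y = \sum_(i <- r) c i * hdot q (v i) y.
Proof.
rewrite /hdot; under eq_bigr do rewrite summxE big_distrl.
rewrite exchange_big /=; apply: eq_bigr => i _; rewrite big_distrr /=.
by apply: eq_bigr => j _; rewrite mxE mulrA.
Qed.

Lemma hdot_evalvec i j :
  hdot q (evalvec F j) (evalvec F i) = \sum_(a : F) a ^+ (j + i * q).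
Proof.
rewrite /hdot -sum_evalpt; apply: eq_bigr => k _.
by rewrite !mxE -exprM -exprD.
Qed.

Hypothesis q_pchar : [pchar F].-nat q.

Lemma exprq_sum I (r : seq I) (g : I -> F) :
  (\sum_(i <- r) g i) ^+ q = \sum_(i <- r) g i ^+ q.
Proof.
apply: (big_morph (fun x : F => x ^+ q)) => [x y|]; first exact: exprDn_pchar.
by rewrite expr0n; case: q q_pchar.
Qed.

Lemma hdot_sumr I (r : seq I) (c : I -> F) (v : I -> 'rV[F]_N) x :
  hdot q x (\sum_(i <- r) c i *: v i) = \sum_(i <- r) c i ^+ q * hdot q x (v i).
Proof.
rewrite /hdot; under eq_bigr do rewrite summxE exprq_sum big_distrr.
rewrite exchange_big /=; apply: eq_bigr => i _; rewrite big_distrr /=.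
by apply: eq_bigr => j _; rewrite mxE exprMn mulrCA.
Qed.

Lemma hdualP (E : {vspace 'rV[F]_N}) y :
  reflect (forall x, x \in E -> hdot q x y = 0) (y \in hdual q E).
Proof.
apply: (iffP idP) => [y_in x x_in | y_orth]; last first.
  apply: memv_span; rewrite mem_filter mem_enum inE andbT.
  by apply/forallP => x; apply/implyP => /y_orth ->.
move: y_in; rewrite /hdual -[hdual_set _ _]in_tupleE => /coord_span ->.
rewrite hdot_sumr big1 // => i _.
have : (hdual_set q E)`_i \in hdual_set q E by rewrite mem_nth.
rewrite mem_filter => /andP[/forallP /(_ x) /implyP /(_ x_in) /eqP -> _].
by rewrite mulr0.
Qed.

Lemma hdual_spanP (X : seq 'rV[F]_N) y :
  reflect (forall x, x \in X -> hdot q x y = 0) (y \in hdual q <<X>>%VS).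
Proof.
apply: (iffP (hdualP _ _)) => [y_orth x /memv_span /y_orth // | y_orth x].
rewrite -[X]in_tupleE => /coord_span ->.
by rewrite hdot_suml big1 // => i _; rewrite y_orth ?mulr0 ?mem_nth.
Qed.

End HermitianForm.

(** * The Hermitian dual of the Reed-Solomon code *)

Section HermitianDualRS.
Variables (F : finFieldType) (q t : nat).
Hypotheses (card_F : #|F| = (q * q)%N) (t_le : (t <= q * q - 2)%N).
Local Notation N := #|F|.
Local Notation E := (Dcode F (iota 0 t.+1)).
Local Notation C := (hdual q E).

Let q_gt1 : (1 < q)%N.
Proof. by have := finNzRing_gt1 F; rewrite card_F; case: q => [|[|]]. Qed.

Lemma hdot_evalvec_dual_exp i j : (i <= t)%N -> (j <= t)%N ->
  hdot q (evalvec F j) (evalvec F i) = if j == dual_exp q i then -1 else 0.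
Proof.
move=> i_le j_le; rewrite hdot_evalvec sum_expr card_F -subn1.
by rewrite dvdn_dual_exp //; lia.
Qed.

Hypothesis q_pchar : [pchar F].-nat q.

Lemma hdual_RSP y :
  reflect (forall i, (i <= t)%N -> hdot q (evalvec F i) y = 0) (y \in C).
Proof.
apply: (iffP (hdual_spanP q_pchar _ _)) => [y_orth i i_le | y_orth x /mapP [i]].
  by apply: y_orth; rewrite map_f // mem_iota.
by rewrite mem_iota => i_lt ->; apply: y_orth.
Qed.

Lemma evalvec_in_hdual i : (i <= t)%N -> (t < dual_exp q i)%N -> evalvec F i \in C.
Proof.
move=> i_le dual_gt; apply/hdual_RSP => j j_le.
by rewrite hdot_evalvec_dual_exp //; case: eqP => // j_eq; lia.
Qed.

Lemma coef_hdual_RS (f : {poly F}) i : (size f <= t.+1)%N -> ev f \in C ->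
  (i <= t)%N -> (dual_exp q i <= t)%N -> f`_i = 0.
Proof.
move=> f_small /hdual_RSP f_orth i_le dual_le.
have dual_inj : {in gtn (q * q) &, injective (dual_exp q)}.
  by apply: can_in_inj => k; apply: dual_expK.
(* Pairing with x^(dual_exp i) isolates the term - f_i^q. *)
move: (f_orth _ dual_le); rewrite (ev_coef f_small) hdot_sumr //.
rewrite (bigD1 (Ordinal (i_le : (i < t.+1)%N))) //= big1 => [|k k_neq].
  rewrite hdot_evalvec_dual_exp // eqxx addr0 mulrN1 => /eqP.
  by rewrite oppr_eq0 expf_eq0 => /andP[_ /eqP].
have k_le : (k <= t)%N := ltn_ord k.
rewrite hdot_evalvec_dual_exp // (inj_in_eq dual_inj) ?inE; try lia.
case: eqP => [i_k | _]; last by rewrite mulr0.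
by case/eqP: k_neq; apply: val_inj.
Qed.

Lemma cap_hdual_RS :
  (E :&: C)%VS = Dcode F [seq i <- iota 0 t.+1 | (t < dual_exp q i)%N].
Proof.
apply/eqP; rewrite eqEsubv; apply/andP; split; last first.
  apply/span_subvP => x /mapP [i].
  rewrite mem_filter mem_iota => /andP [dual_gt i_lt] ->.
  rewrite memv_cap evalvec_in_hdual ?andbT //.
  by apply/memv_span/map_f; rewrite mem_iota.
apply/subvP => x /[!memv_cap] /andP [/Dcode_iotaP [f f_small ->] f_in].
have -> : ev f = \sum_(i < t.+1 | (t < dual_exp q i)%N) f`_i *: evalvec F i.
  rewrite (ev_coef f_small) (bigID (fun i : 'I_t.+1 => t < dual_exp q i)%N) /=.
  rewrite [X in _ + X]big1 ?addr0 // => i; rewrite -leqNgt => dual_le.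
  by rewrite (coef_hdual_RS f_small f_in (ltn_ord i)) ?scale0r.
apply: memv_suml => i dual_gt; apply/memvZ/memv_span/map_f.
by rewrite mem_filter dual_gt mem_iota /=.
Qed.

Lemma dim_cap_hdual_RS :
  \dim (E :&: C) = count (fun i => t < dual_exp q i)%N (iota 0 t.+1).
Proof.
rewrite cap_hdual_RS dim_Dcode ?size_filter ?filter_uniq ?iota_uniq //.
by apply/allP => i; rewrite mem_filter mem_iota card_F /= => /andP [_ i_lt]; lia.
Qed.

Lemma dim_RS_subn_cap_hdual :
  (\dim E - \dim (E :&: C))%N = count (fun i => dual_exp q i <= t)%N (iota 0 t.+1).
Proof.
rewrite dim_Dcode_iota ?card_F ?dim_cap_hdual_RS; last by lia.
rewrite (eq_count (a2 := predC (fun i => dual_exp q i <= t)%N)) => [|i]; last first.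
  by rewrite /= ltnNge.
have := count_predC (fun i => dual_exp q i <= t)%N (iota 0 t.+1).
by rewrite size_iota; lia.
Qed.

Lemma frob_ev_in_hdual (g : {poly F}) : (size g + t <= N.-1)%N ->
  \row_j g.[evalpt j] ^+ q \in C.
Proof.
move=> g_small; apply/hdual_RSP => i i_le.
transitivity (\sum_(j < N) ('X^i * g).[evalpt j]).
  apply: eq_bigr => j _.
  by rewrite !mxE -exprM -card_F expf_card hornerM hornerXn.
rewrite (sum_evalpt (fun a => ('X^i * g).[a])) sum_horner_small //.
by rewrite (leq_trans (size_polyMleq _ _)) // size_polyXn; lia.
Qed.

Lemma wt_frob_vanish (S : {set 'I_N}) :
  wt (\row_j (vanish_poly S).[evalpt j] ^+ q) = #|~: S|.
Proof.
apply: eq_card => j; rewrite !inE mxE expf_eq0 (ltnW q_gt1) /=.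
by rewrite -rootE root_vanish_poly.
Qed.

Lemma hdual_RS_witness : exists2 y, y \in C & (y != 0) && (wt y == t.+2).
Proof.
have t2_le : (t.+2 <= N)%N by rewrite card_F; lia.
pose L := [set widen_ord t2_le i | i : 'I_t.+2].
have card_L : #|L| = t.+2.
  by rewrite card_imset ?card_ord // => a b /(congr1 val) /= /val_inj.
have card_LC : #|~: L| = (N - t.+2)%N by rewrite cardsCs setCK card_ord card_L.
have wt_y := wt_frob_vanish (~: L); rewrite setCK card_L in wt_y.
exists (\row_j (vanish_poly (~: L)).[evalpt j] ^+ q).
  by apply: frob_ev_in_hdual; rewrite size_vanish_poly card_LC card_F; lia.
rewrite wt_y eqxx andbT; apply: contra_eqN wt_y => /eqP ->.
by rewrite /wt (eq_card0 (A := [set j | _])) // => j; rewrite !inE mxE eqxx.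
Qed.

Lemma leq_wt_hdual_RS y : y \in C -> y != 0 -> (t.+2 <= wt y)%N.
Proof.
move=> y_in y_neq0; rewrite leqNgt; apply/negP => wt_small.
set S := [set j | y 0 j != 0].
have /set0Pn [j0 j0_in] : S != set0.
  apply: contraNneq y_neq0 => S0; apply/eqP/rowP => j; rewrite mxE.
  by have := in_set0 j; rewrite -S0 inE => /negbFE /eqP.
pose f := vanish_poly (S :\ j0).
have f_small : (size f <= t.+1)%N.
  by rewrite size_vanish_poly; move: wt_small; rewrite /wt (cardsD1 j0) j0_in.
have : hdot q (ev f) y = 0.
  by apply: (hdualP q_pchar _ _ y_in); apply/Dcode_iotaP; exists f.
rewrite /hdot (bigD1 j0) //= big1 ?addr0 => [|j j_neq]; last first.
  rewrite mxE; have [-> | yj] := eqVneq (y 0 j) 0.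
    by rewrite expr0n gtn_eqF ?mulr0 // ltnW.
  have /rootP -> : root f (evalpt j) by rewrite root_vanish_poly !inE j_neq.
  by rewrite mul0r.
move/eqP; rewrite mxE mulf_eq0 expf_eq0 -rootE root_vanish_poly setD11 /=.
by move: j0_in; rewrite inE (ltnW q_gt1) => /negbTE ->.
Qed.

Lemma min_dist_hdual_RS : min_dist C t.+2.
Proof. split; [exact: hdual_RS_witness | exact: leq_wt_hdual_RS]. Qed.

End HermitianDualRS.

Unset Implicit Arguments.

Theorem mainTheorem2 (F : finFieldType) (p m q : nat) (b0 b1 t : nat) :
  prime p -> (0 < m)%N -> q = (p ^ m)%N -> #|F| = (q ^ 2)%N ->
  (b0 < q)%N -> (b1 < q)%N -> t = (b0 + b1 * q)%N -> (t <= q ^ 2 - 2)%N ->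
  let E := Dcode F (iota 0 t.+1) in
  let C := hdual q E in
  let k := \dim E in
  let c := (\dim E - \dim (E :&: C))%N in
  [/\ #|F| = (q ^ 2)%N,
      min_dist C t.+2,
      (#|F|%:Z - 2 * k%:Z + c%:Z =
         if (b0 + b1 < q - 1)%N
         then ((q - b1)%:Z) ^+ 2 - 2 * b0%:Z - 2
         else ((q - b1 - 1)%:Z) ^+ 2)%R
    & (c%:Z =
         if (b0 + b1 < q - 1)%N
         then (b1%:Z) ^+ 2
         else (b1%:Z) ^+ 2 + 2 * (b0%:Z + b1%:Z - q%:Z) + 3)%R].
Proof.
move=> p_prime m_gt0 q_def card_F b0_lt b1_lt t_def t_le E C k c.
have card_Fq : #|F| = (q * q)%N by rewrite card_F mulnn.
have t_le_qq : (t <= q * q - 2)%N by rewrite mulnn.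
have q_gt1 : (1 < q)%N by rewrite q_def -(expn0 p) ltn_exp2l ?prime_gt1.
have q_pchar : [pchar F].-nat q.
  have p_char : p \in [pchar F].
    by apply: (card_finPcharP (n := (m * 2)%N)); rewrite // card_F q_def -expnM.
  by rewrite q_def pnatX (pnatE _ p_prime) p_char.
have k_def : k = t.+1 by apply: dim_Dcode_iota; rewrite card_Fq; lia.
have c_val : c%:Z = if (b0 + b1 < q - 1)%N then b1%:Z ^+ 2
                    else b1%:Z ^+ 2 + 2 * (b0%:Z + b1%:Z - q%:Z) + 3.
  rewrite /c dim_RS_subn_cap_hdual // t_def count_dual_exp_leq // expr2.
  by case: (leqP q.-1 (b0 + b1)) => [big | small]; [rewrite ifF | rewrite ifT]; lia.
split => //; first exact: min_dist_hdual_RS.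
rewrite c_val card_F k_def t_def.
by case: ifP => _; rewrite !expr2; nia.
Qed.
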